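(* Consider the discrete-time LTI system $x^+ = A^\star x + B^\star u$, $y = C^\star x$ with $x\in\mathbb{R}^n$, $u\in\mathbb{R}^m$, $y\in\mathbb{R}^p$, where $(A^\star,C^\star)$ is observable with observability index $\ell^\star$. Let $\mathcal{O}_{\ell^\star} := \begin{bmatrix} C^\star \\ C^\star A^\star \\ \vdots \\ C^\star {A^\star}^{\ell^\star-1}\end{bmatrix}\in\mathbb{R}^{p\ell^\star\times n}$, let $\mathcal{O}_{\ell^\star}^{\mathrm{L}}$ be a left inverse of it ($\mathcal{O}_{\ell^\star}^{\mathrm{L}}\mathcal{O}_{\ell^\star}=I_n$), let $\mathcal{T}_{\ell^\star}\in\mathbb{R}^{p\ell^\star\times m\ell^\star}$ be the block lower-triangular Toeplitz matrix whose $(i,j)$ block ($i,j=1,\dots,\ell^\star$) is $C^\star {A^\star}^{i-j-1}B^\star$ if $i>j$ and $0_{p\times m}$ otherwise, and let $\mathcal{R}_{\ell^\star} := \begin{bmatrix} {A^\star}^{\ell^\star-1}B^\star & \cdots & A^\star B^\star & B^\star\end{bmatrix}$. Define $Z_{1\ell^\star} := C^\star {A^\star}^{\ell^\star}\mathcal{O}_{\ell^\star}^{\mathrm{L}}$, $Z_{2\ell^\star} := C^\star\mathcal{R}_{\ell^\star} - C^\star {A^\star}^{\ell^\star}\mathcal{O}_{\ell^\star}^{\mathrm{L}}\mathcal{T}_{\ell^\star}$, $Z_{\ell^\star} := \begin{bmatrix} Z_{1\ell^\star} & Z_{2\ell^\star}\end{bmatrix}$. Let $\mathbf{F}_{\ell^\star}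 := \mathrm{blockdiag}(S_p, S_m)$, where $S_p\in\mathbb{R}^{p\ell^\star\times p\ell^\star}$ (resp. $S_m\in\mathbb{R}^{m\ell^\star\times m\ell^\star}$) is the block shift matrix with identity blocks $I_p$ (resp. $I_m$) on the first block superdiagonal and zeros elsewhere; let $\mathbf{L}_{\ell^\star}\in\mathbb{R}^{(p+m)\ell^\star\times p}$ have $I_p$ in its $\ell^\star$-th block row of size $p$ and zeros elsewhere, and let $\mathbf{B}_{\ell^\star}\in\mathbb{R}^{(p+m)\ell^\star\times m}$ have $I_m$ as its last block row (of size $m$) and zeros elsewhere. Set $\mathbf{A}_{\ell^\star} := \mathbf{F}_{\ell^\star} + \mathbf{L}_{\ell^\star} Z_{\ell^\star}$ and $\mathbf{B}^{\mathrm{d}}_{\ell^\star} := \mathbf{L}_{\ell^\star}\begin{bmatrix} I_p & -Z_{1\ell^\star} & -Z_{2\ell^\star}\end{bmatrix}$. Data are collected for $k=0,\dots,T$: the measured input is $u^{\mathrm{m}}(k) = u(k) + d^u(k)$ and the measured output is $y^{\mathrm{m}}(k) = y(k) + d^y(k)$, where $u(k)$ is the actual input, $y(k)=C^\star x(k)$ the actual output, and $d^u,d^y$ unknown noise. Define $\Psi_1 := \begin{bmatrix} y^{\mathrm{m}}(1) & \cdots & y^{\mathrm{m}}(T-\ell^\star+1)\\ \vdots & & \vdots\\ y^{\mathrm{m}}(\ell^\star) & \cdots & y^{\mathrm{m}}(T)\\ u^{\mathrm{m}}(1) & \cdots & u^{\mathrm{m}}(T-\ell^\star+1)\\ \vdots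 & & \vdots\\ u^{\mathrm{m}}(\ell^\star) & \cdots & u^{\mathrm{m}}(T)\end{bmatrix}$, $\Psi_0 := \begin{bmatrix} y^{\mathrm{m}}(0) & \cdots & y^{\mathrm{m}}(T-\ell^\star)\\ \vdots & & \vdots\\ y^{\mathrm{m}}(\ell^\star-1) & \cdots & y^{\mathrm{m}}(T-1)\\ u^{\mathrm{m}}(0) & \cdots & u^{\mathrm{m}}(T-\ell^\star)\\ \vdots & & \vdots\\ u^{\mathrm{m}}(\ell^\star-1) & \cdots & u^{\mathrm{m}}(T-1)\end{bmatrix}$, $U_1 := \begin{bmatrix} u^{\mathrm{m}}(\ell^\star) & \cdots & u^{\mathrm{m}}(T)\end{bmatrix}$, $\Delta_{10} := \begin{bmatrix} d^y(\ell^\star) & \cdots & d^y(T)\\ d^y(0) & \cdots & d^y(T-\ell^\star)\\ \vdots & & \vdots\\ d^y(\ell^\star-1) & \cdots & d^y(T-1)\\ d^u(0) & \cdots & d^u(T-\ell^\star)\\ \vdots & & \vdots\\ d^u(\ell^\star-1) & \cdots & d^u(T-1)\end{bmatrix}$. Then the data satisfy, for $k=\ell^\star,\dots,T$, $y^{\mathrm{m}}(k) = Z_{1\ell^\star}\begin{bmatrix} y^{\mathrm{m}}(k-\ell^\star)\\ \vdots\\ y^{\mathrm{m}}(k-1)\end{bmatrix} + Z_{2\ell^\star}\begin{bmatrix} u^{\mathrm{m}}(k-\ell^\star)\\ \vdots\\ u^{\mathrm{m}}(k-1)\end{bmatrix} - Z_{1\ell^\star}\begin{bmatrix} d^y(k-\ell^\star)\\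 \vdots\\ d^y(k-1)\end{bmatrix} - Z_{2\ell^\star}\begin{bmatrix} d^u(k-\ell^\star)\\ \vdots\\ d^u(k-1)\end{bmatrix} + d^y(k)$, and $\begin{bmatrix} y^{\mathrm{m}}(k-\ell^\star+1)\\ \vdots\\ y^{\mathrm{m}}(k)\\ u^{\mathrm{m}}(k-\ell^\star+1)\\ \vdots\\ u^{\mathrm{m}}(k)\end{bmatrix} = (\mathbf{F}_{\ell^\star} + \mathbf{L}_{\ell^\star}[Z_{1\ell^\star}\ Z_{2\ell^\star}])\begin{bmatrix} y^{\mathrm{m}}(k-\ell^\star)\\ \vdots\\ y^{\mathrm{m}}(k-1)\\ u^{\mathrm{m}}(k-\ell^\star)\\ \vdots\\ u^{\mathrm{m}}(k-1)\end{bmatrix} + \mathbf{B}_{\ell^\star} u^{\mathrm{m}}(k) + \mathbf{L}_{\ell^\star}[I_p\ -Z_{1\ell^\star}\ -Z_{2\ell^\star}]\begin{bmatrix} d^y(k)\\ d^y(k-\ell^\star)\\ \vdots\\ d^y(k-1)\\ d^u(k-\ell^\star)\\ \vdots\\ d^u(k-1)\end{bmatrix}$, and, in matrix form, $\Psi_1 = (\mathbf{F}_{\ell^\star} + \mathbf{L}_{\ell^\star} Z_{\ell^\star})\Psi_0 + \mathbf{B}_{\ell^\star} U_1 + \mathbf{L}_{\ell^\star}[I_p\ -Z_{\ell^\star}]\Delta_{10} = \mathbf{A}_{\ell^\star}\Psi_0 + \mathbf{B}_{\ell^\star} U_1 + \mathbf{B}^{\mathrm{d}}_{\ell^\star}\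Delta_{10}$.
   Context: Unknown system $(A^\star,B^\star,C^\star)$; only the observability index $\ell^\star$ is known. Noisy input-output data $\{u^{\mathrm{m}}(k),y^{\mathrm{m}}(k)\}_{k=0}^T$ are collected from an experiment on the system with additive input noise $d^u$ and output noise $d^y$. All definitions needed are given in the claim. *)

From HB Require Import structures.
From mathcomp Require Import all_boot all_order all_algebra.
Set Implicit Arguments. Unset Strict Implicit. Unset Printing Implicit Defensive.
Import Order.TTheory GRing.Theory Num.Theory.
Local Open Scope ring_scope.

(* Decoding a row index k < a*b of a matrix made of a x b-blocks of height b
   into (block index k %/ b, index inside the block k %% b). *)
Lemma blk_idx_lt (a b : nat) (k : 'I_(a * b)) : (k %/ b < a)%N.
Proof.
have kab : (k < a * b)%N := ltn_ord k.
have b0 : (0 < b)%N.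
  move: (nat_of_ord k) kab => j; rewrite lt0n; apply: contraTneq => ->.
  by rewrite muln0 ltn0.
by rewrite ltn_divLR.
Qed.

Lemma in_idx_lt (a b : nat) (k : 'I_(a * b)) : (k %% b < b)%N.
Proof.
have kab : (k < a * b)%N := ltn_ord k.
have b0 : (0 < b)%N.
  move: (nat_of_ord k) kab => j; rewrite lt0n; apply: contraTneq => ->.
  by rewrite muln0 ltn0.
by rewrite ltn_mod.
Qed.

Definition bidx (a b : nat) (k : 'I_(a * b)) : 'I_a := Ordinal (blk_idx_lt k).
Definition iidx (a b : nat) (k : 'I_(a * b)) : 'I_b := Ordinal (in_idx_lt k).

Definition blockmx (R : Type) (a b p q : nat) (f : 'I_a -> 'I_b -> 'M[R]_(p, q))
  : 'M[R]_(a * p, b * q) :=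
  \matrix_(i, j) f (bidx i) (bidx j) (iidx i) (iidx j).

Definition blockcol (R : Type) (a p q : nat) (f : 'I_a -> 'M[R]_(p, q))
  : 'M[R]_(a * p, q) :=
  \matrix_(i, j) f (bidx i) (iidx i) j.

Definition blockrow (R : Type) (b p q : nat) (f : 'I_b -> 'M[R]_(p, q))
  : 'M[R]_(p, b * q) :=
  \matrix_(i, j) f (bidx j) i (iidx j).

Section Sys.
Variables (R : realFieldType) (n m p : nat).

Definition obsmx (A : 'M[R]_n) (C : 'M[R]_(p, n)) (l : nat) : 'M[R]_(l * p, n) :=
  blockcol (fun i : 'I_l => C *m A ^+ i).

Definition obs_index (A : 'M[R]_n) (C : 'M[R]_(p, n)) (l : nat) : Prop :=
  \rank (obsmx A C l) = n /\ forall k, (k < l)%N -> (\rank (obsmx A C k) < n)%N.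

Definition toepmx (A : 'M[R]_n) (B : 'M[R]_(n, m)) (C : 'M[R]_(p, n)) (l : nat)
  : 'M[R]_(l * p, l * m) :=
  blockmx (fun (i : 'I_l) (j : 'I_l) =>
    if (j < i)%N then C *m A ^+ (i - j - 1) *m B else 0).

Definition ctrbmx (A : 'M[R]_n) (B : 'M[R]_(n, m)) (l : nat) : 'M[R]_(n, l * m) :=
  blockrow (fun j : 'I_l => A ^+ (l - 1 - j) *m B).

Definition Z1 (A : 'M[R]_n) (C : 'M[R]_(p, n)) (l : nat) (OL : 'M[R]_(n, l * p))
  : 'M[R]_(p, l * p) := C *m A ^+ l *m OL.

Definition Z2 (A : 'M[R]_n) (B : 'M[R]_(n, m)) (C : 'M[R]_(p, n)) (l : nat)
  (OL : 'M[R]_(n, l * p)) : 'M[R]_(p, l * m) :=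
  C *m ctrbmx A B l - C *m A ^+ l *m OL *m toepmx A B C l.

Definition Zmx A B C l OL : 'M[R]_(p, l * p + l * m) :=
  row_mx (Z1 A C OL) (Z2 A B C OL).

End Sys.

Definition shiftmx (R : realFieldType) (l q : nat) : 'M[R]_(l * q) :=
  blockmx (fun (i j : 'I_l) => if (j == i.+1 :> nat) then 1%:M else 0).

Definition lastblk (R : realFieldType) (l q : nat) : 'M[R]_(l * q, q) :=
  blockcol (fun i : 'I_l => if (i == l.-1 :> nat) then 1%:M else 0).

Definition Fmx (R : realFieldType) (l p m : nat) : 'M[R]_(l * p + l * m) :=
  block_mx (shiftmx R l p) 0 0 (shiftmx R l m).

Definition Lmx (R : realFieldType) (l p m : nat) : 'M[R]_(l * p + l * m, p) :=
  col_mx (lastblk R l p) 0.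

Definition Bmx (R : realFieldType) (l p m : nat) : 'M[R]_(l * p + l * m, m) :=
  col_mx 0 (lastblk R l m).

Definition stack (R : realFieldType) (q l : nat) (s : nat -> 'cV[R]_q) (t : nat)
  : 'cV[R]_(l * q) :=
  blockcol (fun i : 'I_l => s (t + i)%N).

Definition Psimx (R : realFieldType) (p m l N : nat) (ym : nat -> 'cV[R]_p)
  (um : nat -> 'cV[R]_m) (t0 : nat) : 'M[R]_(l * p + l * m, N) :=
  \matrix_(i, j) (col_mx (stack l ym (t0 + j)%N) (stack l um (t0 + j)%N)) i 0.

Definition U1mx (R : realFieldType) (m l N : nat) (um : nat -> 'cV[R]_m)
  : 'M[R]_(m, N) := \matrix_(i, j) um (l + j)%N i 0.

Definition Delta10 (R : realFieldType) (p m l N : nat) (dy : nat -> 'cV[R]_p)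
  (du : nat -> 'cV[R]_m) : 'M[R]_(p + (l * p + l * m), N) :=
  \matrix_(i, j) (col_mx (dy (l + j)%N) (col_mx (stack l dy j) (stack l du j))) i 0.

From HB Require Import structures.
From mathcomp Require Import all_boot all_order all_algebra.
From mathcomp Require Import zify.
Import Order.TTheory GRing.Theory Num.Theory.
Local Open Scope ring_scope.
Set Implicit Arguments. Unset Strict Implicit.

(* Over a window of length l the true signals satisfy Y = O_l x(t) + T_l U, so the
   left inverse recovers x(t) = O_l^L (Y - T_l U); running the state l more steps gives
   y(t + l) = C A^l x(t) + C R_l U = Z_1 Y + Z_2 U.  Writing the true signals as
   measurement minus noise yields the ARX relation, the block shift structure of
   F, L and B turns it into a one-step recursion of the data windows, and the matrix
   identity is that recursion read column by column. *)

Lemma pairidx_lt a q (i : 'I_a) (j : 'I_q) : (i * q + j < a * q)%N.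
Proof. have := ltn_ord i; have := ltn_ord j; nia. Qed.

Definition pairidx a q (i : 'I_a) (j : 'I_q) : 'I_(a * q) := Ordinal (pairidx_lt i j).

Lemma bidx_pair a q (i : 'I_a) (j : 'I_q) : bidx (pairidx i j) = i.
Proof.
apply/val_inj => /=; have jq := ltn_ord j.
by rewrite divnMDl ?(leq_ltn_trans _ jq) // divn_small // addn0.
Qed.

Lemma iidx_pair a q (i : 'I_a) (j : 'I_q) : iidx (pairidx i j) = j.
Proof. by apply/val_inj => /=; rewrite modnMDl modn_small. Qed.

Lemma pairidxK a q (k : 'I_(a * q)) : pairidx (bidx k) (iidx k) = k.
Proof. by apply/val_inj => /=; rewrite -divn_eq. Qed.

Lemma big_pairidx (V : nmodType) a q (F : 'I_(a * q) -> V) :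
  \sum_k F k = \sum_(i < a) \sum_(j < q) F (pairidx i j).
Proof.
rewrite pair_big /= (reindex (fun ij : 'I_a * 'I_q => pairidx ij.1 ij.2)) //=.
apply: onW_bij; exists (fun k => (bidx k, iidx k)) => [[i j]|k] /=.
  by rewrite bidx_pair iidx_pair.
by rewrite pairidxK.
Qed.

Section BlockAlgebra.
Variable R : pzRingType.

Lemma mul_blockcol_mx a p q r (f : 'I_a -> 'M[R]_(p, q)) (M : 'M[R]_(q, r)) :
  blockcol f *m M = blockcol (fun i => f i *m M).
Proof. by apply/matrixP => i j; rewrite !mxE; apply: eq_bigr => k _; rewrite !mxE. Qed.

Lemma mul_blockrow_blockcol a p q r (f : 'I_a -> 'M[R]_(p, q))
    (g : 'I_a -> 'M[R]_(q, r)) :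
  blockrow f *m blockcol g = \sum_i f i *m g i.
Proof.
apply/matrixP => i j; rewrite mxE summxE big_pairidx; apply: eq_bigr => k _.
by rewrite mxE; apply: eq_bigr => l _; rewrite !mxE bidx_pair iidx_pair.
Qed.

Lemma mul_blockmx_blockcol a b p q r (f : 'I_a -> 'I_b -> 'M[R]_(p, q))
    (g : 'I_b -> 'M[R]_(q, r)) :
  blockmx f *m blockcol g = blockcol (fun i => \sum_j f i j *m g j).
Proof.
apply/matrixP => i j; rewrite !mxE summxE big_pairidx; apply: eq_bigr => k _.
by rewrite mxE; apply: eq_bigr => l _; rewrite !mxE bidx_pair iidx_pair.
Qed.

Lemma add_blockcol a p q (f g : 'I_a -> 'M[R]_(p, q)) :
  blockcol f + blockcol g = blockcol (fun i => f i + g i).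
Proof. by apply/matrixP => i j; rewrite !mxE. Qed.

Lemma opp_blockcol a p q (f : 'I_a -> 'M[R]_(p, q)) :
  - blockcol f = blockcol (fun i => - f i).
Proof. by apply/matrixP => i j; rewrite !mxE. Qed.

Lemma eq_blockcol a p q (f g : 'I_a -> 'M[R]_(p, q)) :
  f =1 g -> blockcol f = blockcol g.
Proof. by move=> fg; apply/matrixP => i j; rewrite !mxE fg. Qed.

End BlockAlgebra.

Section Trajectory.
Variables (R : pzRingType) (n m T : nat) (A : 'M[R]_n) (B : 'M[R]_(n, m)).
Variables (x : nat -> 'cV[R]_n) (u : nat -> 'cV[R]_m).
Hypothesis state_eq : forall k, (k < T)%N -> x k.+1 = A *m x k + B *m u k.

Lemma trajectory t i : (t + i <= T)%N ->
  x (t + i)%N = A ^+ i *m x t + \sum_(j < i) A ^+ (i - 1 - j) *m B *m u (t + j)%N.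
Proof.
elim: i => [|i IH] le_tiT; first by rewrite addn0 big_ord0 expr0 mul1mx addr0.
rewrite addnS state_eq; last lia.
rewrite IH; last lia.
have mulA_pow k : A *m A ^+ k = A ^+ k.+1 by rewrite exprS.
rewrite big_ord_recr /= subSS subn0 subnn expr0 mul1mx.
rewrite mulmxDr mulmxA mulA_pow mulmx_sumr addrA; congr (_ + _ + _).
apply: eq_bigr => j _; rewrite !mulmxA mulA_pow; congr (_ ^+ _ *m _ *m _).
by have := ltn_ord j; lia.
Qed.

End Trajectory.

Section Windows.
Variable R : realFieldType.

Lemma sub_stack q l (s d : nat -> 'cV[R]_q) t :
  stack l s t - stack l d t = stack l (fun k => s k - d k) t.
Proof. by rewrite /stack opp_blockcol add_blockcol. Qed.

Lemma eq_stack q l (s s' : nat -> 'cV[R]_q) t :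
  (forall i, (i < l)%N -> s (t + i)%N = s' (t + i)%N) -> stack l s t = stack l s' t.
Proof. by move=> ss'; apply: eq_blockcol => i; apply: ss'. Qed.

Lemma stackS q l (s : nat -> 'cV[R]_q) t : (0 < l)%N ->
  stack l s t.+1 = shiftmx R l q *m stack l s t + lastblk R l q *m s (t + l)%N.
Proof.
move=> l_gt0; rewrite /shiftmx /lastblk /stack.
rewrite mul_blockmx_blockcol mul_blockcol_mx add_blockcol; apply: eq_blockcol => i.
have := ltn_ord i; case: (ltnP i.+1 l) => [iS_lt_l|l_le_iS] i_lt_l.
  rewrite (bigD1 (Ordinal iS_lt_l)) //= eqxx mul1mx big1 => [|j ne_ji].
    by rewrite ifN_eqC ?mul0mx ?addr0 ?addSnnS //; apply/eqP; lia.
  by rewrite ifN ?mul0mx //; apply: contra ne_ji => /eqP ji; apply/eqP/val_inj.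
rewrite big1 => [|j _]; last by rewrite ifN ?mul0mx //; apply/eqP; have := ltn_ord j; lia.
by rewrite add0r ifT ?mul1mx; [congr s; lia | apply/eqP; lia].
Qed.

End Windows.

Section System.
Variables (R : realFieldType) (n m p l T : nat).
Variables (A : 'M[R]_n) (B : 'M[R]_(n, m)) (C : 'M[R]_(p, n)).
Variables (x : nat -> 'cV[R]_n) (u : nat -> 'cV[R]_m).
Hypothesis state_eq : forall k, (k < T)%N -> x k.+1 = A *m x k + B *m u k.

Lemma output_window t : (t + l <= T.+1)%N ->
  stack l (fun k => C *m x k) t = obsmx A C l *m x t + toepmx A B C l *m stack l u t.
Proof.
move=> le_tlT; rewrite /stack /obsmx /toepmx.
rewrite mul_blockcol_mx mul_blockmx_blockcol add_blockcol; apply: eq_blockcol => i.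
have i_lt_l := ltn_ord i.
rewrite (trajectory state_eq); last lia.
rewrite mulmxDr mulmxA mulmx_sumr; congr (_ + _).
rewrite (big_ord_widen l (fun j => C *m (A ^+ (i - 1 - j) *m B *m u (t + j)%N)))
  ?(ltnW i_lt_l) // big_mkcond /=.
apply: eq_bigr => j _; case: ifP => [j_lt_i|]; last by rewrite mul0mx.
by rewrite !mulmxA subnAC.
Qed.

Lemma state_window t : (t + l <= T)%N ->
  x (t + l)%N = A ^+ l *m x t + ctrbmx A B l *m stack l u t.
Proof.
move=> le_tlT; rewrite (trajectory state_eq) // /ctrbmx /stack mul_blockrow_blockcol.
by congr (_ + _); apply: eq_bigr => j _; rewrite subnAC.
Qed.

Lemma arx_system (OL : 'M[R]_(n, l * p)) t :
  OL *m obsmx A C l = 1%:M -> (t + l <= T)%N ->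
  C *m x (t + l)%N = Z1 A C OL *m stack l (fun k => C *m x k) t
                     + Z2 A B C OL *m stack l u t.
Proof.
move=> OL_linv le_tlT; rewrite state_window // output_window; last lia.
rewrite /Z1 /Z2 !mulmxDr !mulmxA -(mulmxA (C *m A ^+ l) OL) OL_linv mulmx1.
by rewrite mulmxBl addrACA addrN addr0.
Qed.

End System.

Lemma companion_shift (R : realFieldType) l p m (Yw : 'cV[R]_(l * p))
    (Uw : 'cV[R]_(l * m)) (y : 'cV[R]_p) (v : 'cV[R]_m) :
  col_mx (shiftmx R l p *m Yw + lastblk R l p *m y)
         (shiftmx R l m *m Uw + lastblk R l m *m v) =
  Fmx R l p m *m col_mx Yw Uw + Lmx R l p m *m y + Bmx R l p m *m v.
Proof.
rewrite /Fmx /Lmx /Bmx mul_block_col !mul_col_mx !mul0mx addr0 add0r.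
by rewrite !add_col_mx !addr0.
Qed.

Definition colsmx (R : Type) q N (v : 'I_N -> 'cV[R]_q) : 'M[R]_(q, N) :=
  \matrix_(i, j) v j i 0.

Section ColumnMatrices.
Variables (R : pzRingType) (q N : nat).
Implicit Types v w : 'I_N -> 'cV[R]_q.

Lemma mul_colsmx r (M : 'M[R]_(r, q)) v : M *m colsmx v = colsmx (fun j => M *m v j).
Proof. by apply/matrixP => i j; rewrite !mxE; apply: eq_bigr => k _; rewrite mxE. Qed.

Lemma add_colsmx v w : colsmx v + colsmx w = colsmx (fun j => v j + w j).
Proof. by apply/matrixP => i j; rewrite !mxE. Qed.

Lemma eq_colsmx v w : v =1 w -> colsmx v = colsmx w.
Proof. by move=> vw; apply/matrixP => i j; rewrite !mxE vw. Qed.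

End ColumnMatrices.

Section NoisyData.
Variables (R : realFieldType) (n m p l T : nat).
Variables (A : 'M[R]_n) (B : 'M[R]_(n, m)) (C : 'M[R]_(p, n)) (OL : 'M[R]_(n, l * p)).
Variables (x : nat -> 'cV[R]_n) (u du um : nat -> 'cV[R]_m) (dy ym : nat -> 'cV[R]_p).
Hypothesis OL_linv : OL *m obsmx A C l = 1%:M.
Hypothesis state_eq : forall k, (k < T)%N -> x k.+1 = A *m x k + B *m u k.
Hypothesis input_meas : forall k, (k <= T)%N -> um k = u k + du k.
Hypothesis output_meas : forall k, (k <= T)%N -> ym k = C *m x k + dy k.

Local Notation Z1l := (Z1 A C OL).
Local Notation Z2l := (Z2 A B C OL).

Lemma denoised_output_window t : (t + l <= T.+1)%N ->
  stack l ym t - stack l dy t = stack l (fun k => C *m x k) t.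
Proof.
move=> le_tlT; rewrite sub_stack; apply: eq_stack => i i_lt_l.
by rewrite output_meas ?addrK //; lia.
Qed.

Lemma denoised_input_window t : (t + l <= T.+1)%N ->
  stack l um t - stack l du t = stack l u t.
Proof.
move=> le_tlT; rewrite sub_stack; apply: eq_stack => i i_lt_l.
by rewrite input_meas ?addrK //; lia.
Qed.

Lemma arx_output k : (l <= k)%N -> (k <= T)%N ->
  ym k = Z1l *m stack l ym (k - l) + Z2l *m stack l um (k - l)
         - Z1l *m stack l dy (k - l) - Z2l *m stack l du (k - l) + dy k.
Proof.
move=> le_lk; rewrite -(subnK le_lk) addnK; move: (k - l)%N => t le_tlT.
rewrite output_meas // (arx_system state_eq OL_linv le_tlT).
rewrite -denoised_output_window -?denoised_input_window; try lia.
by rewrite !mulmxBr addrACA !addrA.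
Qed.

Lemma arx_output_row k : (l <= k)%N -> (k <= T)%N ->
  ym k = row_mx Z1l Z2l *m col_mx (stack l ym (k - l)) (stack l um (k - l))
         + row_mx 1%:M (row_mx (- Z1l) (- Z2l))
           *m col_mx (dy k) (col_mx (stack l dy (k - l)) (stack l du (k - l))).
Proof.
move=> le_lk le_kT; rewrite arx_output // !mul_row_col mul1mx !mulNmx.
by rewrite [dy k + _]addrC !addrA.
Qed.

Lemma window_step k : (0 < l)%N -> (l <= k)%N -> (k <= T)%N ->
  col_mx (stack l ym (k - l).+1) (stack l um (k - l).+1) =
    (Fmx R l p m + Lmx R l p m *m row_mx Z1l Z2l)
      *m col_mx (stack l ym (k - l)) (stack l um (k - l))
    + Bmx R l p m *m um k
    + Lmx R l p m *m row_mx 1%:M (row_mx (- Z1l) (- Z2l))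
        *m col_mx (dy k) (col_mx (stack l dy (k - l)) (stack l du (k - l))).
Proof.
move=> l_gt0 le_lk le_kT; rewrite !stackS // subnK // companion_shift.
by rewrite arx_output_row // mulmxDr mulmxDl !mulmxA addrA [LHS]addrAC.
Qed.

Lemma data_matrix_eq : (0 < l)%N ->
  let N := (T.+1 - l)%N in
  Psimx l N ym um 1 = (Fmx R l p m + Lmx R l p m *m Zmx A B C OL) *m Psimx l N ym um 0
                      + Bmx R l p m *m U1mx l N um
                      + Lmx R l p m *m row_mx 1%:M (- Zmx A B C OL) *m Delta10 l N dy du.
Proof.
move=> l_gt0 N; rewrite !mul_colsmx !add_colsmx; apply: eq_colsmx => j.
have le_ljT : (l + j <= T)%N by have := ltn_ord j; rewrite /N; lia.
have := window_step l_gt0 (leq_addr j l) le_ljT.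
by rewrite addKn add1n add0n opp_row_mx; apply.
Qed.

End NoisyData.

Unset Implicit Arguments.

Theorem lemma4 (R : realFieldType) (n m p l T : nat)
  (A : 'M[R]_n) (B : 'M[R]_(n, m)) (C : 'M[R]_(p, n))
  (OL : 'M[R]_(n, l * p))
  (x : nat -> 'cV[R]_n) (u : nat -> 'cV[R]_m)
  (du : nat -> 'cV[R]_m) (dy : nat -> 'cV[R]_p)
  (um : nat -> 'cV[R]_m) (ym : nat -> 'cV[R]_p) :
  (0 < l)%N ->
  obs_index A C l ->
  OL *m obsmx A C l = 1%:M ->
  (forall k, (k < T)%N -> x k.+1 = A *m x k + B *m u k) ->
  (forall k, (k <= T)%N -> um k = u k + du k) ->
  (forall k, (k <= T)%N -> ym k = C *m x k + dy k) ->
  let Z1l := Z1 A C OL in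
  let Z2l := Z2 A B C OL in
  let Zl := Zmx A B C OL in
  let Fl := Fmx R l p m in
  let Ll := Lmx R l p m in
  let Bl := Bmx R l p m in
  let Al := Fl + Ll *m Zl in
  let Bdl := Ll *m row_mx 1%:M (- Zl) in
  let N := (T.+1 - l)%N in
  (forall k, (l <= k)%N -> (k <= T)%N ->
     ym k = Z1l *m stack l ym (k - l) + Z2l *m stack l um (k - l)
            - Z1l *m stack l dy (k - l) - Z2l *m stack l du (k - l) + dy k) /\
  (forall k, (l <= k)%N -> (k <= T)%N ->
     col_mx (stack l ym (k - l).+1) (stack l um (k - l).+1) =
       (Fl + Ll *m row_mx Z1l Z2l) *m col_mx (stack l ym (k - l)) (stack l um (k - l))
       + Bl *m um k
       + Ll *m row_mx 1%:M (row_mx (- Z1l) (- Z2l))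
           *m col_mx (dy k) (col_mx (stack l dy (k - l)) (stack l du (k - l)))) /\
  (Psimx l N ym um 1 = (Fl + Ll *m Zl) *m Psimx l N ym um 0
                        + Bl *m U1mx l N um
                        + Ll *m row_mx 1%:M (- Zl) *m Delta10 l N dy du /\
   Psimx l N ym um 1 = Al *m Psimx l N ym um 0 + Bl *m U1mx l N um
                        + Bdl *m Delta10 l N dy du).
Proof.
move=> l_gt0 _ OL_linv state_eq input_meas output_meas Z1l Z2l Zl Fl Ll Bl Al Bdl N.
have data_eq := data_matrix_eq OL_linv state_eq input_meas output_meas l_gt0.
split; first exact: arx_output OL_linv state_eq input_meas output_meas.
split=> [k|]; first exact (window_step OL_linv state_eq input_meas output_meas l_gt0).
by split; exact data_eq.
Qed.
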